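(* Let $\mathbf X$ be a nonempty set, $m\ge1$ an integer and $Y>0$. Consider the protocol in which at each round $n=1,2,\dots$ Reality announces $x_n\in\mathbf X$, Predictor announces $\mu_n\in\mathbb R^m$, and Reality announces $y_n\in YU_m$. Let $F_1,F_2,\dots$ be a sequence of functions $F_i:\mathbf X\to\mathbb R^m$ and let $w_1,w_2,\dots$ be positive weights with $\sum_i w_i=1$. Then there is a strategy for Predictor producing predictions $\mu_n\in YU_m$ that guarantees, for all $N=1,2,\dots$ and all $i=1,2,\dots$, $$\sum_{n=1}^N\|y_n-\mu_n\|^2\le\sum_{n=1}^N\|y_n-F_i(x_n)\|^2+8Y^2\ln\frac1{w_i}.$$
   Context: $\|\cdot\|$ is the Euclidean norm on $\mathbb R^m$ and $U_m=\{v\in\mathbb R^m:\|v\|\le1\}$ is the closed unit ball, so $YU_m$ is the closed ball of radius $Y$ centred at $0$. A strategy for Predictor maps each history $(x_1,y_1,\dots,x_{n-1},y_{n-1},x_n)$ to $\mu_n$; the guarantee must hold for every (possibly adaptive) sequence of moves of Reality. *)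

From HB Require Import structures.
From mathcomp Require Import all_boot all_order all_algebra.
From mathcomp Require Import all_classical all_reals all_analysis.
Set Implicit Arguments. Unset Strict Implicit. Unset Printing Implicit Defensive.
Import Order.TTheory GRing.Theory Num.Theory.
Local Open Scope ring_scope.

Definition enorm (R : realType) (m : nat) (v : 'rV[R]_m) : R :=
  Num.sqrt (\sum_(j < m) (v ord0 j) ^+ 2).

(* A Predictor strategy: maps the history (x_1,y_1,...,x_{n-1},y_{n-1}) and the
   current x_n to the prediction mu_n. *)
Definition strategy (R : realType) (X : Type) (m : nat) :=
  seq (X * 'rV[R]_m) -> X -> 'rV[R]_m.

(* History of the first n rounds (0-indexed rounds 0..n-1). *)
Definition history (R : realType) (X : Type) (m : nat)
  (xs : nat -> X) (ys : nat -> 'rV[R]_m) (n : nat) : seq (X * 'rV[R]_m) :=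
  map (fun k => (xs k, ys k)) (iota 0 n).

Definition pred_at (R : realType) (X : Type) (m : nat) (S : strategy R X m)
  (xs : nat -> X) (ys : nat -> 'rV[R]_m) (n : nat) : 'rV[R]_m :=
  S (history xs ys n) (xs n).

From HB Require Import structures.
From mathcomp Require Import all_boot all_order all_algebra.
From mathcomp Require Import all_classical all_reals all_analysis.
From mathcomp Require Import ring lra.
Import Order.TTheory GRing.Theory Num.Theory numFieldNormedType.Exports.
Local Open Scope classical_set_scope.
Local Open Scope ring_scope.

(* Predictor runs Vovk's Aggregating Algorithm with learning rate
   eta = 1 / (8 Y^2) on the experts F_i clipped to the ball Y U_m; clipping
   only lowers an expert's loss, since the outcomes lie in the ball.  As
   exp (- t^2) is concave for 2 t^2 <= 1, the map z |-> exp (- eta |y - z|^2)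
   is concave on the ball, so the weighted mean mu of the clipped experts
   satisfies  sum_i p_i exp (- eta |y - g_i|^2) <= exp (- eta |y - mu|^2)
   for normalized weights p.  Hence the potential
   Phi_N = sum_i w_i exp (- eta L_i(N)) is at most exp (- eta L(N)), where L(N)
   is Predictor's loss, and w_i exp (- eta L_i(N)) <= Phi_N gives
   L(N) <= L_i(N) + ln (1 / w_i) / eta. *)

Section ExpTangent.
Context {R : realType}.
Implicit Types a b t x y : R.

Lemma is_derive_ge0_ler {f df : R -> R} {x y} :
  (forall t, is_derive t 1 f (df t)) -> (forall t, x <= t <= y -> 0 <= df t) ->
  x <= y -> f x <= f y.
Proof.
move=> f_df df_ge0 xy.
have f_cont : continuous f.
  by move=> t; apply/differentiable_continuous/derivable1_diffP; case: (f_df t).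
have [c] := MVT_segment xy (fun t _ => f_df t) (continuous_subspaceT f_cont).
rewrite in_itv/= => xcy /eqP; rewrite subr_eq => /eqP->.
by rewrite lerDr mulr_ge0 ?subr_ge0 ?df_ge0.
Qed.

Let gauss : R -> R := expR \o (- (id : R -> R) ^+ 2).

Let small t := 2 * t ^+ 2 <= 1.

Let small_between x y t : small x -> small y -> x <= t <= y -> small t.
Proof. by rewrite /small => hx hy /andP[xt ty]; have [t0|t0] := leP 0 t; nra. Qed.

Let mul_gauss_ndecr x y : small x -> small y -> x <= y ->
  x * gauss x <= y * gauss y.
Proof.
move=> hx hy; apply: (@is_derive_ge0_ler (id * gauss)
    (fun t => (1 - 2 * t ^+ 2) * gauss t)).
- by move=> t; apply: is_derive_eq; rewrite /gauss !fctE /GRing.scale /=; ring.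
- move=> t xty; rewrite mulr_ge0 ?expR_ge0 // subr_ge0.
  exact: small_between xty.
Qed.

(* [expR (- t ^+ 2)] is concave where [2 * t ^+ 2 <= 1], hence below its
   tangents there: the gap [h] below has derivative [2 * (phi t - phi a)] with
   [phi t = t * gauss t] nondecreasing on that range. *)
Lemma expNsqr_tangent a b : 2 * a ^+ 2 <= 1 -> 2 * b ^+ 2 <= 1 ->
  expR (- b ^+ 2) <= expR (- a ^+ 2) * (1 - 2 * a * (b - a)).
Proof.
move=> ha hb.
pose h := cst (gauss a) * (cst (1 + 2 * a ^+ 2) - cst (2 * a) * id) - gauss.
pose dh t := 2 * (t * gauss t - a * gauss a).
have h_dh t : is_derive t 1 h (dh t).
  by apply: is_derive_eq; rewrite /dh /gauss !fctE /GRing.scale /=; ring.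
have h_a : h a = 0 by rewrite /h /gauss !fctE /=; ring.
rewrite -subr_ge0 (_ : _ - _ = h b); last by rewrite /h /gauss !fctE /=; ring.
rewrite -h_a.
have [ab|ba] := leP a b.
- apply: (is_derive_ge0_ler h_dh) => // t ta_b.
  rewrite mulr_ge0 // subr_ge0 mul_gauss_ndecr //; first exact: small_between ta_b.
  by case/andP: ta_b.
- rewrite -lerN2.
  apply: (@is_derive_ge0_ler (- h) (fun t => - dh t) b a); last exact: ltW.
  move=> t tb_a; rewrite oppr_ge0 pmulr_rle0 // subr_le0 mul_gauss_ndecr //.
  + exact: small_between tb_a.
  + by case/andP: tb_a.
Qed.
End ExpTangent.

Section Euclid.
Context {R : realType} {m : nat}.
Implicit Types u v : 'rV[R]_m.

Definition vdot u v : R := \sum_(j < m) u ord0 j * v ord0 j.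

Lemma enorm_ge0 v : 0 <= enorm v.
Proof. exact: sqrtr_ge0. Qed.

Lemma enorm_sqr v : enorm v ^+ 2 = vdot v v.
Proof.
rewrite /enorm sqr_sqrtr; last by apply: sumr_ge0 => j _; exact: sqr_ge0.
by apply: eq_bigr => j _; rewrite expr2.
Qed.

Lemma vdotC u v : vdot u v = vdot v u.
Proof. by apply: eq_bigr => j _; rewrite mulrC. Qed.

Lemma vdotBr u v w : vdot u (v - w) = vdot u v - vdot u w.
Proof. by rewrite /vdot -sumrB; apply: eq_bigr => j _; rewrite !mxE mulrBr. Qed.

Lemma vdotBl u v w : vdot (u - v) w = vdot u w - vdot v w.
Proof. by rewrite vdotC vdotBr !(vdotC w). Qed.

Lemma vdotZr (c : R) u v : vdot u (c *: v) = c * vdot u v.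
Proof. by rewrite /vdot mulr_sumr; apply: eq_bigr => j _; rewrite !mxE mulrCA. Qed.

Lemma enormB_sqr u v : enorm (u - v) ^+ 2 = enorm u ^+ 2 - 2 * vdot u v + enorm v ^+ 2.
Proof. by rewrite !enorm_sqr !vdotBl !vdotBr (vdotC v u); ring. Qed.

Lemma enormB_sqr_le u v : enorm (u - v) ^+ 2 <= 2 * enorm u ^+ 2 + 2 * enorm v ^+ 2.
Proof.
rewrite !enorm_sqr /vdot !mulr_sumr -big_split /=; apply: ler_sum => j _.
by rewrite !mxE; have := sqr_ge0 (u ord0 j + v ord0 j); nra.
Qed.

Lemma enormZ_sqr (c : R) v : enorm (c *: v) ^+ 2 = c ^+ 2 * enorm v ^+ 2.
Proof. by rewrite !enorm_sqr vdotZr vdotC vdotZr mulrA -expr2. Qed.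

Lemma ler_coord_enorm v (j : 'I_m) : `|v ord0 j| <= enorm v.
Proof.
rewrite -sqrtr_sqr /enorm ler_sqrt; last by apply: sumr_ge0 => k _; exact: sqr_ge0.
by rewrite (bigD1 j) //= lerDl; apply: sumr_ge0 => k _; exact: sqr_ge0.
Qed.

Lemma enorm_eq0 v : enorm v = 0 -> v = 0.
Proof.
move=> v0; apply/rowP => j; rewrite mxE.
by apply/normr0_eq0/eqP; rewrite eq_le normr_ge0 andbT -v0 ler_coord_enorm.
Qed.

Lemma vdot_le u v : vdot u v <= enorm u * enorm v.
Proof.
have [u0|u0] := eqVneq (enorm u) 0.
  by rewrite u0 mul0r /vdot big1 // => j _; rewrite (enorm_eq0 u u0) mxE mul0r.
have [v0|v0] := eqVneq (enorm v) 0.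
  by rewrite v0 mulr0 /vdot big1 // => j _; rewrite (enorm_eq0 v v0) mxE mulr0.
have uv_gt0 : 0 < enorm u * enorm v by rewrite mulr_gt0 // lt0r ?u0 ?v0 enorm_ge0.
have := sqr_ge0 (enorm (enorm v *: u - enorm u *: v)).
by rewrite enormB_sqr !enormZ_sqr vdotZr vdotC vdotZr (vdotC v u); nra.
Qed.

Lemma expNsqr_enorm_tangent (eta : R) u v : 0 < eta ->
  2 * eta * enorm u ^+ 2 <= 1 -> 2 * eta * enorm v ^+ 2 <= 1 ->
  expR (- (eta * enorm v ^+ 2)) <= expR (- (eta * enorm u ^+ 2)) * (1 - 2 * eta * vdot u (v - u)).
Proof.
move=> eta_gt0 hu hv.
have sqrt_eta : Num.sqrt eta ^+ 2 = eta by rewrite sqr_sqrtr // ltW.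
have sqr_scaled (w : 'rV[R]_m) : (Num.sqrt eta * enorm w) ^+ 2 = eta * enorm w ^+ 2.
  by rewrite exprMn sqrt_eta.
set a := Num.sqrt eta * enorm u; set b := Num.sqrt eta * enorm v.
have ha : 2 * a ^+ 2 <= 1 by rewrite sqr_scaled mulrA.
have hb : 2 * b ^+ 2 <= 1 by rewrite sqr_scaled mulrA.
rewrite -!sqr_scaled; apply: le_trans (expNsqr_tangent _ _ ha hb) _.
rewrite ler_pM2l ?expR_gt0 // vdotBr -enorm_sqr.
have a2 : a ^+ 2 = eta * enorm u ^+ 2 := sqr_scaled u.
have uv : eta * vdot u v <= a * b.
  by rewrite mulrACA -expr2 sqrt_eta ler_pM2l // vdot_le.
lra.
Qed.

Definition clip_ball (Y : R) v := if enorm v <= Y then v else (Y / enorm v) *: v.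

Lemma enorm_clip_ball Y v : 0 <= Y -> enorm (clip_ball Y v) <= Y.
Proof.
move=> Y_ge0; rewrite /clip_ball; case: ifPn => //; rewrite -ltNge => Y_lt.
have v_gt0 : 0 < enorm v by apply: le_lt_trans Y_lt.
rewrite -ler_sqr ?nnegrE ?enorm_ge0 // enormZ_sqr -exprMn divfK ?gt_eqF //.
Qed.

Lemma clip_ball_sqr_le Y y v : enorm y <= Y ->
  enorm (y - clip_ball Y v) ^+ 2 <= enorm (y - v) ^+ 2.
Proof.
move=> yY; rewrite /clip_ball; case: ifPn => //; rewrite -ltNge => Y_lt.
have v_gt0 : 0 < enorm v := le_lt_trans (le_trans (enorm_ge0 y) yY) Y_lt.
rewrite !enormB_sqr enormZ_sqr vdotZr -exprMn divfK ?gt_eqF //.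
set c := Y / enorm v.
have c_le1 : c <= 1 by rewrite ler_pdivrMr // mul1r ltW.
have cY : c * (Y * enorm v) = Y ^+ 2 by rewrite mulrCA divfK ?gt_eqF.
have yv_le : vdot y v <= Y * enorm v.
  by apply: le_trans (vdot_le y v) _; rewrite ler_pM2r.
have : 0 <= (1 - c) * (Y * enorm v - vdot y v) by rewrite mulr_ge0 ?subr_ge0.
have := sqr_ge0 (enorm v - Y); lra.
Qed.
End Euclid.

Section SeriesBounds.
Context {R : realType}.
Implicit Types a c : nat -> R.

Lemma ler_limn_series a : (forall i, 0 <= a i) -> cvgn (series a) ->
  forall i, a i <= limn (series a).
Proof.
move=> a_ge0 a_cvg i; apply: le_trans (nondecreasing_cvgn_le _ a_cvg i.+1).
  by rewrite seriesSr lerDr; apply: sumr_ge0.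
exact: nondecreasing_series.
Qed.

Lemma limn_series_gt0 a : (forall i, 0 < a i) -> cvgn (series a) -> 0 < limn (series a).
Proof.
move=> a_gt0 a_cvg; apply: lt_le_trans (a_gt0 0) _.
by apply: ler_limn_series => // i; exact: ltW.
Qed.

Lemma is_cvg_series_mul_bounded a c (C : R) : (forall i, 0 <= a i) -> cvgn (series a) ->
  (forall i, `|c i| <= C) -> cvgn (series (fun i => a i * c i)).
Proof.
move=> a_ge0 a_cvg cC; apply: normed_cvg.
apply: (@series_le_cvg _ _ (C *: a)) => i /=.
- exact: normr_ge0.
- by rewrite !fctE mulr_ge0 // (le_trans _ (cC 0)).
- by rewrite !fctE normrM ger0_norm // mulrC ler_wpM2r.
- exact: is_cvg_seriesZ.
Qed.

Lemma cvg_series_mulr a (k : R) : cvgn (series a) ->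
  series (fun i => a i * k) @ \oo --> limn (series a) * k.
Proof.
move=> a_cvg; have -> : series (fun i => a i * k) = (fun n => series a n * k).
  by apply/funext => n; rewrite /series /= mulr_suml.
exact: cvgMr_tmp.
Qed.

End SeriesBounds.

Section WeightedMean.
Context {R : realType} {m : nat}.
Variables (a : nat -> R) (g : nat -> 'rV[R]_m) (Y : R).
Hypotheses (a_gt0 : forall i, 0 < a i) (a_cvg : cvgn (series a)).
Hypothesis g_le : forall i, enorm (g i) <= Y.

Definition wmean : 'rV[R]_m :=
  \row_j (limn (series (fun i => a i * g i ord0 j)) / limn (series a)).

Let A : R := limn (series a).

Let a_ge0 i : 0 <= a i. Proof. exact: ltW. Qed.

Let cvg_series_coord j : series (fun i => a i * g i ord0 j) @ \oo --> A * wmean ord0 j.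
Proof.
rewrite mxE mulrC divfK ?gt_eqF ?limn_series_gt0 //.
apply: (@is_cvg_series_mul_bounded _ _ _ Y) => // i.
by apply: le_trans (g_le i); exact: ler_coord_enorm.
Qed.

Lemma cvg_series_vdot v :
  series (fun i => a i * vdot v (g i)) @ \oo --> A * vdot v wmean.
Proof.
have -> : series (fun i => a i * vdot v (g i)) =
    (fun n => \sum_j v ord0 j * series (fun i => a i * g i ord0 j) n).
  apply/funext => n; rewrite /series /vdot /=.
  under eq_bigr do rewrite mulr_sumr.
  rewrite exchange_big /=; apply: eq_bigr => j _; rewrite mulr_sumr.
  by apply: eq_bigr => i _; ring.
rewrite /vdot mulr_sumr; apply: cvg_big => [|j _]; first exact: add_continuous.
by rewrite mulrCA; apply: cvgMl_tmp.
Qed.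

Lemma enorm_wmean_le : enorm wmean <= Y.
Proof.
have : A * vdot wmean wmean <= A * (enorm wmean * Y).
  apply: (ler_cvg_to (cvg_series_vdot wmean) (cvg_series_mulr a _ a_cvg)).
  apply: nearW => n; apply: ler_sum => i _.
  by rewrite ler_pM2l // (le_trans (vdot_le _ _)) // ler_wpM2l ?enorm_ge0.
rewrite ler_pM2l ?limn_series_gt0 // -enorm_sqr expr2.
have Y_ge0 : 0 <= Y := le_trans (enorm_ge0 _) (g_le 0).
by have := enorm_ge0 wmean; nra.
Qed.

(* Jensen's inequality for the concave map [z |-> expR (- eta * |y - z|^2)],
   through its tangent at [wmean]. *)
Lemma wmean_exp_concave (eta : R) y : 0 < eta ->
  (forall i, 2 * eta * enorm (y - g i) ^+ 2 <= 1) -> 2 * eta * enorm (y - wmean) ^+ 2 <= 1 ->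
  limn (series (fun i => a i * expR (- (eta * enorm (y - g i) ^+ 2))))
    <= A * expR (- (eta * enorm (y - wmean) ^+ 2)).
Proof.
move=> eta_gt0 gy_small my_small.
set d := y - wmean; set E := expR (- (eta * enorm d ^+ 2)).
have lhs_cvg : cvgn (series (fun i => a i * expR (- (eta * enorm (y - g i) ^+ 2)))).
  apply: (@is_cvg_series_mul_bounded _ _ _ 1) => // i.
  by rewrite ger0_norm ?expR_ge0 // expR_le1 oppr_le0 mulr_ge0 ?sqr_ge0 // ltW.
have rhs_cvg : series (fun i => a i * (E * (1 - 2 * eta * vdot d (wmean - g i)))) @ \oo --> A * E.
  have -> : series (fun i => a i * (E * (1 - 2 * eta * vdot d (wmean - g i)))) =
      (fun n => series a n * (E * (1 - 2 * eta * vdot d wmean))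
                + 2 * eta * E * series (fun i => a i * vdot d (g i)) n).
    apply/funext => n; rewrite /series /= mulr_suml [X in _ + X]mulr_sumr -big_split /=.
    by apply: eq_bigr => i _; rewrite vdotBr; ring.
  rewrite (_ : A * E = A * (E * (1 - 2 * eta * vdot d wmean)) + 2 * eta * E * (A * vdot d wmean)); last by ring.
  by apply: cvgD; [exact: cvgMr_tmp | apply: cvgMl_tmp; exact: cvg_series_vdot].
apply: (ler_cvg_to lhs_cvg rhs_cvg); apply: nearW => n; apply: ler_sum => i _.
rewrite ler_pM2l // (_ : wmean - g i = (y - g i) - d); last by rewrite /d opprB [RHS]addrC addrA subrK.
exact: expNsqr_enorm_tangent.
Qed.

End WeightedMean.

Lemma historyS (R : realType) (X : Type) (m : nat) (xs : nat -> X) (ys : nat -> 'rV[R]_m) n :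
  history xs ys n.+1 = rcons (history xs ys n) (xs n, ys n).
Proof. by rewrite /history -[n.+1]addn1 iotaD map_cat cats1. Qed.

Section AggregatingAlgorithm.
Context {R : realType} {X : Type} {m : nat}.
Variables (Y : R) (F : nat -> X -> 'rV[R]_m) (w : nat -> R).
Hypotheses (Y_gt0 : 0 < Y) (w_gt0 : forall i, 0 < w i).
Hypothesis w_sum1 : series w @ \oo --> (1 : R^o).
Implicit Types (xs : nat -> X) (ys : nat -> 'rV[R]_m).

Let eta : R := (8 * Y ^+ 2)^-1.

Let eta_gt0 : 0 < eta. Proof. by rewrite invr_gt0 mulr_gt0 // exprn_gt0. Qed.

Let eta_small (u v : 'rV[R]_m) : enorm u <= Y -> enorm v <= Y -> 2 * eta * enorm (u - v) ^+ 2 <= 1.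
Proof.
move=> uY vY.
have sqr_le (z : 'rV[R]_m) : enorm z <= Y -> enorm z ^+ 2 <= Y ^+ 2.
  by move=> zY; rewrite ler_sqr ?nnegrE ?enorm_ge0 // ltW.
have eta8 : eta * (8 * Y ^+ 2) = 1 by rewrite mulVf // gt_eqF // mulr_gt0 ?exprn_gt0.
have : eta * enorm (u - v) ^+ 2 <= eta * (4 * Y ^+ 2).
  rewrite ler_pM2l //.
  by have := enormB_sqr_le u v; have := sqr_le _ uY; have := sqr_le _ vY; lra.
lra.
Qed.

Let w_cvg : cvgn (series w). Proof. by apply/cvg_ex; exists 1. Qed.

Definition expert i x := clip_ball Y (F i x).

Definition cum_loss (h : seq (X * 'rV[R]_m)) i :=
  \sum_(p <- h) enorm (p.2 - expert i p.1) ^+ 2.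

Definition agg_weight h i := w i * expR (- (eta * cum_loss h i)).

Definition agg_strategy : strategy R X m :=
  fun h x => wmean (agg_weight h) (expert ^~ x).

Definition agg_potential h := limn (series (agg_weight h)).

Lemma enorm_expert_le i x : enorm (expert i x) <= Y.
Proof. exact/enorm_clip_ball/ltW. Qed.

Lemma agg_weight_gt0 h i : 0 < agg_weight h i.
Proof. by rewrite mulr_gt0 ?expR_gt0. Qed.

Lemma is_cvg_agg_weight h : cvgn (series (agg_weight h)).
Proof.
apply: (@is_cvg_series_mul_bounded _ _ _ 1) => // [i|i]; first exact: ltW.
rewrite ger0_norm ?expR_ge0 // expR_le1 oppr_le0 mulr_ge0 ?(ltW eta_gt0) //.
by apply: sumr_ge0 => p _; exact: sqr_ge0.
Qed.

Lemma enorm_agg_strategy_le h x : enorm (agg_strategy h x) <= Y.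
Proof.
apply: enorm_wmean_le => [i||i]; [exact: agg_weight_gt0 | exact: is_cvg_agg_weight |].
exact: enorm_expert_le.
Qed.

Lemma agg_weight_rcons h x y i : agg_weight (rcons h (x, y)) i =
  agg_weight h i * expR (- (eta * enorm (y - expert i x) ^+ 2)).
Proof.
by rewrite /agg_weight /cum_loss -cats1 big_cat big_seq1 -mulrA -expRD mulrDr opprD.
Qed.

Lemma agg_potential_rcons h x y : enorm y <= Y ->
  agg_potential (rcons h (x, y)) <=
  agg_potential h * expR (- (eta * enorm (y - agg_strategy h x) ^+ 2)).
Proof.
move=> yY; rewrite /agg_potential (_ : agg_weight (rcons h (x, y)) =
    fun i => agg_weight h i * expR (- (eta * enorm (y - expert i x) ^+ 2))).
  apply: (wmean_exp_concave _ _ _ (agg_weight_gt0 h) (is_cvg_agg_weight h) (enorm_expert_le ^~ x) _ _ eta_gt0).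
  - by move=> i; apply: eta_small => //; exact: enorm_expert_le.
  - by apply: eta_small => //; exact: enorm_agg_strategy_le.
exact/funext/agg_weight_rcons.
Qed.

Lemma agg_potential_history xs ys N : (forall n, enorm (ys n) <= Y) ->
  agg_potential (history xs ys N) <=
  expR (- (eta * \sum_(n < N) enorm (ys n - pred_at agg_strategy xs ys n) ^+ 2)).
Proof.
move=> ys_le; elim: N => [|N IH].
  rewrite big_ord0 mulr0 oppr0 expR0 /agg_potential (_ : agg_weight _ = w).
    by rewrite (cvg_lim _ w_sum1).
  by apply/funext => i; rewrite /agg_weight /cum_loss big_nil mulr0 oppr0 expR0 mulr1.
rewrite historyS big_ord_recr /= mulrDr opprD expRD.
apply: le_trans (agg_potential_rcons _ _ _ (ys_le N)) _.
by rewrite ler_wpM2r ?expR_ge0.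
Qed.

Lemma cum_loss_history xs ys N i :
  cum_loss (history xs ys N) i = \sum_(n < N) enorm (ys n - expert i (xs n)) ^+ 2.
Proof.
rewrite /cum_loss /history big_map (_ : iota 0 N = index_iota 0 N) ?big_mkord //.
by rewrite /index_iota subn0.
Qed.

Lemma agg_loss_le xs ys : (forall n, enorm (ys n) <= Y) -> forall N i,
  \sum_(n < N) enorm (ys n - pred_at agg_strategy xs ys n) ^+ 2
    <= \sum_(n < N) enorm (ys n - F i (xs n)) ^+ 2 + 8 * Y ^+ 2 * ln (w i)^-1.
Proof.
move=> ys_le N i.
set L := \sum_(n < _) _; set Li := \sum_(n < _) _.
have weight_le : agg_weight (history xs ys N) i <= expR (- (eta * L)).
  apply: le_trans (agg_potential_history xs ys N ys_le).
  by apply: ler_limn_series => [j|]; [exact/ltW/agg_weight_gt0 | exact: is_cvg_agg_weight].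
have expert_le : cum_loss (history xs ys N) i <= Li.
  by rewrite cum_loss_history; apply: ler_sum => n _; exact: clip_ball_sqr_le.
move: weight_le; rewrite -ler_ln ?posrE ?agg_weight_gt0 ?expR_gt0 //.
rewrite lnM ?posrE ?expR_gt0 // !expRK lnV ?posrE //.
have eta8 : eta * (8 * Y ^+ 2) = 1 by rewrite mulVf // gt_eqF // mulr_gt0 ?exprn_gt0.
move=> ln_le; rewrite -(ler_pM2l eta_gt0) mulrDr mulrA eta8 mul1r.
have : eta * cum_loss (history xs ys N) i <= eta * Li by rewrite ler_pM2l.
lra.
Qed.

End AggregatingAlgorithm.

Theorem lemma1 (R : realType) (X : Type) (m : nat) (Y : R)
  (F : nat -> X -> 'rV[R]_m) (w : nat -> R) :
  inhabited X -> (0 < m)%N -> 0 < Y ->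
  (forall i, 0 < w i) -> series w @ \oo --> (1%R : R^o) ->
  exists S : strategy R X m,
    (forall h x, enorm (S h x) <= Y) /\
    (forall (xs : nat -> X) (ys : nat -> 'rV[R]_m),
       (forall n, enorm (ys n) <= Y) ->
       forall (N : nat) (i : nat),
         \sum_(n < N) enorm (ys n - pred_at S xs ys n) ^+ 2
         <= \sum_(n < N) enorm (ys n - F i (xs n)) ^+ 2
            + 8 * Y ^+ 2 * ln (w i)^-1).
Proof.
move=> _ _ Y_gt0 w_gt0 w_sum1; exists (agg_strategy Y F w); split.
  exact: enorm_agg_strategy_le.
exact: agg_loss_le.
Qed.
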